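(* Let $\mathbb{X},\mathbb{Y}$ be real Banach spaces and $T:\mathbb{X}\to\mathbb{Y}$ a bounded linear operator that preserves Birkhoff–James orthogonality at $u$ and at $v$, where $u,v\in S_{\mathbb{X}}$ lie on a common face $F$ of $B_{\mathbb{X}}$ which is supported by a functional $f\in S_{\mathbb{X}^*}$ (i.e. $f\equiv1$ on $F$). Then $\|Tu\|=\|Tv\|$.
   Context: $u\perp_B v$ means $\|u+\lambda v\|\ge\|u\|$ for all real $\lambda$; $T$ preserves Birkhoff–James orthogonality at $x$ if $x\perp_B w\Rightarrow Tx\perp_B Tw$ for all $w$. A convex subset $F$ of a convex set $G$ is a face of $G$ if whenever $a,b\in G$, $0<t<1$ and $(1-t)a+tb\in F$, then $a,b\in F$. $B_{\mathbb{X}}$, $S_{\mathbb{X}}$ denote the closed unit ball and unit sphere. *)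

From HB Require Import structures.
From mathcomp Require Import all_boot all_order all_algebra.
From mathcomp Require Import all_classical all_reals all_analysis.
Set Implicit Arguments. Unset Strict Implicit. Unset Printing Implicit Defensive.
Import Order.TTheory GRing.Theory Num.Theory.
Import numFieldNormedType.Exports.
Local Open Scope classical_set_scope.
Local Open Scope ring_scope.

Definition bj_orth {R : realType} {V : normedModType R} (u v : V) : Prop :=
  forall lambda : R, `|u| <= `|u + lambda *: v|.

Definition preserves_bj_at {R : realType} {V W : normedModType R}
  (T : V -> W) (x : V) : Prop :=
  forall w : V, bj_orth x w -> bj_orth (T x) (T w).

Definition unit_ball {R : realType} (V : normedModType R) : set V :=
  [set x | `|x| <= 1].

Definition convex_set {R : realType} {V : normedModType R} (A : set V) : Prop :=
  forall a b, A a -> A b -> forall t : R, 0 <= t <= 1 ->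
    A ((1 - t) *: a + t *: b).

Definition is_face {R : realType} {V : normedModType R} (F G : set V) : Prop :=
  [/\ convex_set F, F `<=` G &
      forall a b (t : R), G a -> G b -> 0 < t < 1 ->
        F ((1 - t) *: a + t *: b) -> F a /\ F b].

Definition dual_unit_sphere {R : realType} {V : normedModType R}
  (f : V -> R) : Prop :=
  (forall x : V, `|f x| <= `|x|) /\
  (forall e : R, 0 < e -> exists x : V, `|x| <= 1 /\ 1 - e < `|f x|).

From HB Require Import structures.
From mathcomp Require Import all_boot all_order all_algebra.
From mathcomp Require Import all_classical all_reals all_analysis.
Import Order.TTheory GRing.Theory Num.Theory.
Import numFieldNormedType.Exports.
Local Open Scope classical_set_scope.
Local Open Scope ring_scope.

(* Since f = 1 on F and f has norm at most 1, the line u + R (u - v) lies in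
   the hyperplane f = 1, so u is Birkhoff-James orthogonal to u - v, and
   symmetrically v to v - u.  Preservation at u, tested with lambda = -1,
   gives |Tu| <= |Tu - (Tu - Tv)| = |Tv|, and symmetrically. *)

Lemma bj_orth_norming {R : realType} {V : normedModType R}
    {f : {linear V -> R^o}} {a w : V} :
  (forall x, `|f x| <= `|x|) -> f a = `|a| -> f w = 0 -> bj_orth a w.
Proof.
move=> f_le1 fa fw0 lambda; apply: le_trans (f_le1 _).
by rewrite linearD linearZ /= fw0 scaler0 addr0 fa normr_id.
Qed.

Lemma preserves_bj_norm_le {R : realType} {V W : normedModType R}
    {T : {linear V -> W}} {a b : V} :
  preserves_bj_at T a -> bj_orth a (a - b) -> `|T a| <= `|T b|.
Proof.
move=> Ta ab; have := Ta _ ab (-1).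
by rewrite linearB scaleN1r opprB addrC subrK.
Qed.

Theorem mainTheorem12 (R : realType) (X Y : completeNormedModType R)
  (T : {linear X -> Y}) (hT : continuous T)
  (F : set X) (f : {linear X -> R^o}) (u v : X)
  (hF : is_face F (@unit_ball R X))
  (hf : dual_unit_sphere (f : X -> R))
  (hfF : forall x, F x -> f x = 1)
  (hu : `|u| = 1) (hv : `|v| = 1) (huF : F u) (hvF : F v)
  (hTu : preserves_bj_at T u) (hTv : preserves_bj_at T v) :
  `|T u| = `|T v|.
Proof.
have [f_le1 _] := hf.
have orth a b : F a -> F b -> `|a| = 1 -> bj_orth a (a - b).
  move=> Fa Fb na; apply: bj_orth_norming f_le1 _ _; first by rewrite na hfF.
  by rewrite linearB /= !hfF // subrr.
apply/eqP; rewrite eq_le; apply/andP; split.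
- exact: preserves_bj_norm_le hTu (orth u v huF hvF hu).
- exact: preserves_bj_norm_le hTv (orth v u hvF huF hv).
Qed.
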